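(* Let $s,k\geq 2$. Then the circular graph $G(ks+1,k)=\operatorname{Cay}(\mathbb{Z}_{ks+1},\{k,k+1,\ldots,ks+1-k\})$ is isomorphic to the $s$-stable Kneser graph $\operatorname{KG}(ks+1,k)_{s-\operatorname{stab}}$.
   Context: For integers $s,k\geq 2$ and $n\geq ks$, a subset $S\subseteq[n]=\{1,\dots,n\}$ is $s$-stable if $s\leq |i-j|\leq n-s$ for all distinct $i,j\in S$. The $s$-stable Kneser graph $\operatorname{KG}(n,k)_{s-\operatorname{stab}}$ has as vertices the $s$-stable $k$-subsets of $[n]$, two vertices being adjacent iff they are disjoint. For a group $A$ and a subset $S\subseteq A$ closed under inverses and not containing the identity, the Cayley graph $\operatorname{Cay}(A,S)$ has vertex set $A$, with $u,v$ adjacent iff $u^{-1}v\in S$ (for the cyclic group $\mathbb{Z}_n$, iff $v-u\in S$). For $n\geq 2k$, the circular graph $G(n,k)$ is $\operatorname{Cay}(\mathbb{Z}_n,\{k,k+1,\ldots,n-k\})$. *)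

From mathcomp Require Import all_boot all_order.
Set Implicit Arguments. Unset Strict Implicit. Unset Printing Implicit Defensive.

(* Ground set [n] is modelled as 'I_n = {0,...,n-1} (shift by one; only
   differences |i-j| matter). Z_n is also modelled by 'I_n with arithmetic mod n. *)

Definition circ_adj (n k : nat) (u v : 'I_n) : bool :=
  let d := (v + n - u) %% n in (k <= d) && (d <= n - k).

Definition natdist (i j : nat) : nat := (i - j) + (j - i).

Definition s_stable (n s : nat) (S : {set 'I_n}) : bool :=
  [forall i in S, forall j in S,
     (i != j) ==> (s <= natdist i j) && (natdist i j <= n - s)].

Definition stabKG_vertex (n k s : nat) :=
  {S : {set 'I_n} | (#|S| == k) && s_stable s S}.

Definition stabKG_adj (n k s : nat) (A B : stabKG_vertex n k s) : bool :=
  [disjoint (val A) & (val B)].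

Definition graph_iso (T1 T2 : Type) (e1 : T1 -> T1 -> bool) (e2 : T2 -> T2 -> bool) :=
  exists f : T1 -> T2, bijective f /\ forall x y, e2 (f x) (f y) = e1 x y.

From mathcomp Require Import all_boot all_order zify.

(* Modulo n = ks + 1, multiplication by s is invertible (with inverse -k), and
   it maps the cyclic interval {u, ..., u + k - 1} onto the arithmetic
   progression {su, su + s, ..., su + (k - 1)s}, which is s-stable.  Two such
   intervals meet exactly when their starting points are at cyclic distance
   less than k, i.e. when they are not adjacent in G(n, k).  Conversely, for an
   s-stable k-set A the arcs {a, ..., a + s - 1}, a in A, are pairwise disjoint,
   so they cover all of Z_n but a single point p; walking from p + 1 in steps of
   s then shows A = {p + 1 + is | i < k}. *)

Set Implicit Arguments.
Unset Strict Implicit.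
Unset Printing Implicit Defensive.

Section CyclicDifference.
Variable n : nat.

Definition cdiff (x y : 'I_n) := (y + n - x) %% n.

Lemma circ_adjE k x y : circ_adj k x y = (k <= cdiff x y <= n - k).
Proof. by []. Qed.

Lemma cdiffE (x y : 'I_n) : cdiff x y = if x <= y then y - x else y + n - x.
Proof.
have := ltn_ord x; have := ltn_ord y; rewrite /cdiff.
case: (leqP x y) => le_xy lt_y lt_x.
  by rewrite (_ : y + n - x = y - x + n) ?modnDr ?modn_small //; lia.
by rewrite modn_small //; lia.
Qed.

Lemma cdiff_lt (x y : 'I_n) : cdiff x y < n.
Proof.
by rewrite cdiffE; have := ltn_ord x; have := ltn_ord y; case: (leqP x y); lia.
Qed.

Lemma addn_cdiff (x y : 'I_n) : x + cdiff x y = y %[mod n].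
Proof.
rewrite modnDmr (_ : x + (y + n - x) = y + n) ?modnDr //.
by have := ltn_ord x; lia.
Qed.

Lemma circ_adjC k (x y : 'I_n) : circ_adj k x y = circ_adj k y x.
Proof.
have := ltn_ord x; have := ltn_ord y; rewrite !circ_adjE !cdiffE.
by case: (ltngtP x y) => [lt_xy | lt_yx | /val_inj -> //] lt_y lt_x;
  apply/idP/idP; lia.
Qed.

Lemma natdist_circ_adj k (x y : 'I_n) :
  (k <= natdist x y <= n - k) = circ_adj k x y.
Proof.
have := ltn_ord x; have := ltn_ord y; rewrite circ_adjE cdiffE /natdist.
by case: (leqP x y) => le_xy lt_y lt_x; apply/idP/idP; lia.
Qed.

Lemma s_stableP s (A : {set 'I_n}) :
  reflect (forall x y, x \in A -> y \in A -> x != y -> circ_adj s x y) (s_stable s A).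
Proof.
apply: (iffP forall_inP) => [stA x y xA yA ne_xy | adjA x xA].
  by have /forall_inP/(_ y yA)/implyP/(_ ne_xy) := stA x xA; rewrite natdist_circ_adj.
by apply/forall_inP => y yA; apply/implyP => ne_xy; rewrite natdist_circ_adj // adjA.
Qed.

Lemma circ_adjPn k (u v : 'I_n) :
  reflect (exists i j : 'I_k, u + i = v + j %[mod n]) (~~ circ_adj k u v).
Proof.
have d_lt_n := cdiff_lt u v.
have uv := addn_cdiff u v; rewrite circ_adjE; set d := cdiff u v in d_lt_n uv *.
apply: (iffP idP) => [not_adj | [i [j E]]].
  case: (ltnP d k) => [d_lt_k | k_le_d].
    have k_gt0 : 0 < k := leq_ltn_trans (leq0n d) d_lt_k.
    by exists (Ordinal d_lt_k), (Ordinal k_gt0); rewrite addn0.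
  have j_lt_k : n - d < k by move: not_adj; rewrite k_le_d /=; lia.
  have k_gt0 : 0 < k := leq_ltn_trans (leq0n _) j_lt_k.
  exists (Ordinal k_gt0), (Ordinal j_lt_k) => /=.
  rewrite addn0 -[in RHS]modnDml -uv modnDml -addnA subnKC ?modnDr //.
  exact: ltnW.
have {}E : i = d + j %[mod n].
  apply/eqP; rewrite -(eqn_modDl u) addnA -[(u + d + j) %% n]modnDml uv modnDml.
  exact/eqP.
apply/negP => /andP[k_le_d d_le]; have lt_ik := ltn_ord i; have lt_jk := ltn_ord j.
by move: E; rewrite !modn_small; lia.
Qed.

End CyclicDifference.

Section CyclicOrdinals.
Variable n : nat.
Hypothesis n_gt0 : 0 < n.

Definition ordmod (m : nat) : 'I_n := Ordinal (ltn_pmod m n_gt0).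

Lemma ordmod_ord (x : 'I_n) : ordmod x = x.
Proof. by apply: val_inj; rewrite /= modn_small. Qed.

Lemma ordmodP a b : reflect (ordmod a = ordmod b) (a == b %[mod n]).
Proof. by apply: (iffP eqP) => [E | /(congr1 val)//]; apply: val_inj. Qed.

Lemma ordmodDml a m : ordmod (a %% n + m) = ordmod (a + m).
Proof. by apply/ordmodP; rewrite modnDml. Qed.

Lemma ordmod_shift_neq (x : 'I_n) m : 0 < m < n -> ordmod (x + m) != x.
Proof.
move=> /andP[m_gt0 m_lt_n]; apply/eqP => /(congr1 val) /= /eqP.
rewrite -{2}(modn_small (ltn_ord x)) -{2}[val x]addn0 eqn_modDl mod0n modn_small //.
by move/eqP=> m0; rewrite m0 in m_gt0.
Qed.

Lemma cdiff_shift (x : 'I_n) m : cdiff x (ordmod (x + m)) = m %% n.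
Proof.
rewrite /cdiff /= -addnBA; last exact: ltnW.
by rewrite modnDml (_ : x + m + (n - x) = m + n) ?modnDr //; have := ltn_ord x; lia.
Qed.

Section StableSets.
Variables (s : nat) (A : {set 'I_n}).
Hypotheses (s_le_n : s <= n) (stA : s_stable s A).

Lemma stable_shift_notin x m : x \in A -> 0 < m < s -> ordmod (x + m) \notin A.
Proof.
move=> xA /andP[m_gt0 m_lt_s]; apply/negP => yA.
have m_lt_n : m < n by apply: leq_trans s_le_n.
have ne : x != ordmod (x + m) by rewrite eq_sym ordmod_shift_neq ?m_gt0.
have := s_stableP _ _ stA _ _ xA yA ne.
by rewrite circ_adjE cdiff_shift modn_small // leqNgt m_lt_s.
Qed.

Definition arc_cover : {set 'I_n} :=
  [set ordmod (ar.1 + ar.2) | ar : 'I_n * 'I_s in setX A [set: 'I_s]].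

Lemma arc_coverP q :
  reflect (exists2 a, a \in A & exists2 r, r < s & q = ordmod (a + r))
          (q \in arc_cover).
Proof.
apply: (iffP imsetP) => [[[a r]] | [a aA [r lt_rs ->]]].
  by rewrite in_setX in_setT andbT => aA ->; exists a => //; exists r.
by exists (a, Ordinal lt_rs); rewrite ?in_setX ?aA ?in_setT.
Qed.

Lemma card_arc_cover : #|arc_cover| = #|A| * s.
Proof.
rewrite card_in_imset ?cardsX ?cardsT ?card_ord //.
move=> [a r] [b r']; rewrite !in_setX !in_setT !andbT /=.
wlog le_rr' : a b r r' / r <= r' => [wlog_le aA bA E | aA bA /esym E].
  by case: (leqP r r') => [|/ltnW] le; [|symmetry]; apply: wlog_le.
have Eb : ordmod (b + (r' - r)) = a.
  rewrite -[RHS]ordmod_ord; apply/ordmodP.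
  by rewrite -(eqn_modDr r) -addnA subnK //; apply/ordmodP.
case: (ltnP r r') => [lt_rr' | le_r'r].
  have : 0 < r' - r < s by have := ltn_ord r'; lia.
  by move/(stable_shift_notin bA); rewrite Eb aA.
have eq_rr' : r = r' by apply: ord_inj; lia.
by rewrite -eq_rr' subnn addn0 ordmod_ord in Eb; rewrite Eb eq_rr'.
Qed.

End StableSets.
End CyclicOrdinals.

Section CircularKneser.
Variables s k : nat.
Hypotheses (s_gt1 : 1 < s) (k_gt0 : 0 < k).
Let s_gt0 : 0 < s := ltnW s_gt1.
Local Notation n := (k * s + 1).

Lemma ks1_gt0 : 0 < n. Proof. by rewrite addn1. Qed.
Local Notation om := (ordmod ks1_gt0).

Definition progression a : {set 'I_n} := [set om (a + i * s) | i : 'I_k].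

Lemma mul_s_inv : (n - k) * s = 1 %[mod n].
Proof. by rewrite (_ : (n - k) * s = (s - 1) * n + 1) ?modnMDl //; nia. Qed.

Lemma eqn_mod_mul_s a b : (s * a == s * b %[mod n]) = (a == b %[mod n]).
Proof.
apply/idP/idP => [/eqP E | /eqP E]; last by rewrite -modnMmr E modnMmr.
have inv c : c %% n = ((n - k) * ((s * c) %% n)) %% n.
  by rewrite modnMmr mulnA -modnMml mul_s_inv modnMml mul1n.
by rewrite inv E -inv.
Qed.

Lemma progression_card a : #|progression a| = k.
Proof.
rewrite card_imset ?card_ord // => i j /ordmodP.
have lt_ik := ltn_ord i; have lt_jk := ltn_ord j.
rewrite eqn_modDl !modn_small; try nia.
by rewrite eqn_pmul2r // => /eqP/ord_inj.
Qed.

Lemma progression_stable a : s_stable s (progression a).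
Proof.
apply/s_stableP => _ _ /imsetP[i _ ->] /imsetP[j _ ->].
wlog lt_ij : i j / i < j => [wlog_lt ne_ij | _].
  case: (ltngtP i j) => [lt_ij | lt_ji | /ord_inj eq_ij]; first exact: wlog_lt.
    by rewrite circ_adjC wlog_lt // eq_sym.
  by rewrite eq_ij eqxx in ne_ij.
have lt_jk := ltn_ord j.
rewrite (_ : a + j * s = a + i * s + (j - i) * s); last first.
  by rewrite -addnA -mulnDl subnKC // ltnW.
rewrite -[om (_ + _ + _)]ordmodDml circ_adjE cdiff_shift modn_small; nia.
Qed.

Lemma eq_progression a b : a = b %[mod n] -> progression a = progression b.
Proof. by move=> /eqP E; apply: eq_imset => i; apply/ordmodP; rewrite eqn_modDr. Qed.

Lemma progression_vertex a : (#|progression a| == k) && s_stable s (progression a).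
Proof. by rewrite progression_card eqxx progression_stable. Qed.

Lemma progression_mulE u : progression (s * u) = [set om (s * (u + i)) | i : 'I_k].
Proof. by apply: eq_imset => i; rewrite mulnDr [s * i]mulnC. Qed.

Lemma disjoint_progression (u v : 'I_n) :
  [disjoint progression (s * u) & progression (s * v)] = circ_adj k u v.
Proof.
rewrite !progression_mulE; apply/negb_inj.
apply/pred0Pn/circ_adjPn => [[x /andP[/imsetP[i _ ->]]] | [i [j E]]].
  case/imsetP=> j _ /ordmodP.
  by rewrite eqn_mod_mul_s => /eqP E; exists i, j.
exists (om (s * (u + i))); rewrite /= imset_f //=.
by apply/imsetP; exists j => //; apply/ordmodP; rewrite eqn_mod_mul_s E.
Qed.

Lemma progression_mul_inj : injective (fun u : 'I_n => progression (s * u)).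
Proof.
have shift (u v : 'I_n) :
    progression (s * u) = progression (s * v) -> exists j : 'I_k, u = v + j %[mod n].
  rewrite !progression_mulE => E.
  have : om (s * u) \in [set om (s * (v + j)) | j : 'I_k].
    by rewrite -E; apply/imsetP; exists (Ordinal k_gt0); rewrite /= ?addn0.
  by case/imsetP=> j _ /ordmodP; rewrite eqn_mod_mul_s => /eqP uv; exists j.
move=> u v E; have [j uv] := shift u v E; have [i vu] := shift v u (esym E).
have /eqP : u + (i + j) = u + 0 %[mod n].
  by rewrite addnA -modnDml -vu modnDml -uv addn0.
have lt_ik := ltn_ord i; have lt_jk := ltn_ord j.
rewrite eqn_modDl mod0n modn_small; last by clear -lt_ik lt_jk s_gt1; nia.
move=> /eqP ij0; rewrite -(ordmod_ord ks1_gt0 u) -(ordmod_ord ks1_gt0 v).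
have j0 : j = 0 :> nat by clear -ij0; lia.
by apply/ordmodP; rewrite uv j0 addn0.
Qed.

Lemma gap_progression_sub (A : {set 'I_n}) (p : 'I_n) :
  s_stable s A -> ~: arc_cover ks1_gt0 s A = [set p] -> progression p.+1 \subset A.
Proof.
move=> stA gap; have s_le_n : s <= n by nia.
have p_notin : p \notin arc_cover ks1_gt0 s A by rewrite -in_setC gap set11.
have in_arcs q : q != p -> q \in arc_cover ks1_gt0 s A.
  by move=> ne_qp; apply/negPn; rewrite -in_setC gap in_set1.
apply/subsetP => _ /imsetP[[i lt_ik] _ ->] /=; elim: i lt_ik => [|i IH] lt_ik.
  have : om (p + 1) != p by rewrite ordmod_shift_neq //; nia.
  rewrite mul0n addn0 (addn1 p) => /in_arcs /arc_coverP[a aA [r lt_rs Epa]].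
  case: (posnP r) => [r0 | r_gt0]; first by rewrite Epa r0 addn0 ordmod_ord.
  case/negP: p_notin; apply/arc_coverP; exists a => //; exists r.-1; first lia.
  rewrite -[LHS](ordmod_ord ks1_gt0); apply/ordmodP.
  rewrite -(eqn_modDr 1) -addnA (addn1 p) (addn1 r.-1) prednK //.
  exact/(ordmodP ks1_gt0).
have xA := IH (ltnW lt_ik); set x := om (p.+1 + i * s) in xA.
have Ex : om (p.+1 + i.+1 * s) = om (x + s) by rewrite ordmodDml mulSnr addnA.
have : om (p + (1 + i.+1 * s)) != p.
  by rewrite ordmod_shift_neq //; clear -lt_ik s_gt0; nia.
rewrite addnA (addn1 p) => /in_arcs /arc_coverP[a aA [r lt_rs Exa]].
case: (posnP r) => [r0 | r_gt0]; first by rewrite Exa r0 addn0 ordmod_ord.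
(* Otherwise a = x + (s - r) would lie in A too close after x. *)
have Ea : om (x + (s - r)) = a.
  rewrite -[RHS](ordmod_ord ks1_gt0); apply/ordmodP.
  rewrite -(eqn_modDr r) -addnA subnK; last exact: ltnW.
  exact/(ordmodP ks1_gt0)/(etrans (esym Ex) Exa).
have : 0 < s - r < s by lia.
by move=> /(stable_shift_notin ks1_gt0 s_le_n stA xA); rewrite Ea aA.
Qed.

Lemma stable_set_progression (A : {set 'I_n}) :
  #|A| = k -> s_stable s A -> exists u : 'I_n, A = progression (s * u).
Proof.
move=> cardA stA; have s_le_n : s <= n by nia.
have /cards1P[p gap] : #|~: arc_cover ks1_gt0 s A| == 1.
  rewrite -(eqn_add2l #|arc_cover ks1_gt0 s A|) cardsC card_ord.
  by rewrite card_arc_cover // cardA addn1.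
exists (om ((n - k) * p.+1)).
rewrite (@eq_progression _ p.+1); last first.
  by rewrite modnMmr mulnA [s * _]mulnC -modnMml mul_s_inv modnMml mul1n.
apply/eqP; rewrite eq_sym eqEcard progression_card cardA leqnn andbT.
exact: gap_progression_sub.
Qed.

End CircularKneser.

Theorem mainTheorem7 (s k : nat) (hs : 2 <= s) (hk : 2 <= k) :
  graph_iso (@circ_adj (k * s + 1) k) (@stabKG_adj (k * s + 1) k s).
Proof.
have k_gt0 : 0 < k := ltnW hk.
pose f (u : 'I_(k * s + 1)) : stabKG_vertex (k * s + 1) k s :=
  exist (fun S => _) _ (progression_vertex hs k_gt0 (s * u)).
have f_inj : injective f.
  by move=> u v /(congr1 val) fuv; apply: (progression_mul_inj hs k_gt0).
have f_surj S : exists u, f u = S.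
  have /andP[/eqP cardS stS] := valP S.
  have [u Su] := stable_set_progression hs k_gt0 cardS stS.
  by exists u; apply: val_inj.
exists f; split; last by move=> u v; apply: disjoint_progression hs k_gt0 u v.
apply: (inj_card_bij f_inj); rewrite -(card_codom f_inj).
apply/subset_leq_card/subsetP => S _.
by have [u <-] := f_surj S; apply: codom_f.
Qed.
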